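(* Let $d\ge2$, $0<\eta\le\frac{1}{2d}$ and $\gamma=\eta d$, and consider one round $t$ of the Bandit-PCA Online Mirror Descent algorithm with sparse sampling, where $\boldsymbol{W}_t$ is a positive definite density matrix and $\boldsymbol{L}_t$ is symmetric with spectral norm at most $1$. Then $\boldsymbol{W}_t^{-1}+\eta\widetilde{\boldsymbol{L}}_t$ is positive definite and, with $\widetilde{\boldsymbol{W}}_{t+1}=(\boldsymbol{W}_t^{-1}+\eta\widetilde{\boldsymbol{L}}_t)^{-1}$, \[ \mathbb{E}_t\big[\langle\boldsymbol{W}_t-\widetilde{\boldsymbol{W}}_{t+1},\widetilde{\boldsymbol{L}}_t\rangle\big]\le8\eta d\,\|\boldsymbol{L}_t\|_F^2, \] where $\mathbb{E}_t$ is expectation over the round-$t$ sampling randomness given $\boldsymbol{W}_t$ and $\boldsymbol{L}_t$.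
   Context: Notation: $\langle \boldsymbol{A},\boldsymbol{B}\rangle=\mathrm{tr}(\boldsymbol{A}^\top \boldsymbol{B})$; $\|\cdot\|_F$ Frobenius norm; a density matrix is a symmetric positive semidefinite matrix of trace $1$. Sparse sampling at round $t$: write $\boldsymbol{W}_t=\sum_i\mu_i\boldsymbol{u}_i\boldsymbol{u}_i^\top$ (eigendecomposition, orthonormal $\boldsymbol{u}_i$) and $\lambda_i=(1-\gamma)\mu_i+\gamma/d$. Draw $I,J$ independently with $\Pr(I=i)=\Pr(J=i)=\lambda_i$. If $I=J$: $\boldsymbol{w}_t=\boldsymbol{u}_I$ and $\widetilde{\boldsymbol{L}}_t=(\ell_t/\lambda_I^2)\boldsymbol{u}_I\boldsymbol{u}_I^\top$. If $I\ne J$: draw a uniform sign $s\in\{-1,1\}$, $\boldsymbol{w}_t=(\boldsymbol{u}_I+s\boldsymbol{u}_J)/\sqrt2$ and $\widetilde{\boldsymbol{L}}_t=\frac{s\ell_t}{2\lambda_I\lambda_J}(\boldsymbol{u}_I\boldsymbol{u}_J^\top+\boldsymbol{u}_J\boldsymbol{u}_I^\top)$. Here $\ell_t=\boldsymbol{w}_t^\top\boldsymbol{L}_t\boldsymbol{w}_t$. *)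

(* matrices over a real closed field (algebraic stand-in for R). *)
From HB Require Import structures.
From mathcomp Require Import all_boot all_order all_algebra.
Set Implicit Arguments. Unset Strict Implicit. Unset Printing Implicit Defensive.
Import Order.TTheory GRing.Theory Num.Theory.
Local Open Scope ring_scope.

Section BanditPCA.
Variable R : rcfType.
Variable n : nat.

Definition posdef (A : 'M[R]_n) : Prop :=
  A^T = A /\ forall v : 'cV[R]_n, v != 0 -> 0 < (v^T *m A *m v) 0 0.

Definition density (A : 'M[R]_n) : Prop :=
  A^T = A /\ (forall v : 'cV[R]_n, 0 <= (v^T *m A *m v) 0 0) /\ \tr A = 1.

Definition frob_inner (A B : 'M[R]_n) : R := \tr (A^T *m B).

Definition frob_norm2 (A : 'M[R]_n) : R := \sum_(i < n) \sum_(j < n) A i j ^+ 2.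

Definition spec_norm_le1 (A : 'M[R]_n) : Prop :=
  forall v : 'cV[R]_n, ((A *m v)^T *m (A *m v)) 0 0 <= (v^T *m v) 0 0.

(* Sparse sampling, given eigenvectors (columns of U) and eigenvalues mu of W_t *)
Definition ucol (U : 'M[R]_n) (i : 'I_n) : 'cV[R]_n := col i U.

Definition lam (mu : 'I_n -> R) (eta : R) (i : 'I_n) : R :=
  let gamma := eta * n%:R in (1 - gamma) * mu i + gamma / n%:R.

Definition sgn (b : bool) : R := if b then 1 else -1.

Definition wvec (U : 'M[R]_n) (i j : 'I_n) (b : bool) : 'cV[R]_n :=
  if i == j then ucol U i
  else (Num.sqrt 2)^-1 *: (ucol U i + sgn b *: ucol U j).

Definition ell (U L : 'M[R]_n) (i j : 'I_n) (b : bool) : R :=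
  ((wvec U i j b)^T *m L *m wvec U i j b) 0 0.

Definition Ltil (U : 'M[R]_n) (mu : 'I_n -> R) (eta : R) (L : 'M[R]_n)
    (i j : 'I_n) (b : bool) : 'M[R]_n :=
  if i == j then
    (ell U L i j b / lam mu eta i ^+ 2) *: (ucol U i *m (ucol U i)^T)
  else
    (sgn b * ell U L i j b / (2 * lam mu eta i * lam mu eta j)) *:
      (ucol U i *m (ucol U j)^T + ucol U j *m (ucol U i)^T).

(* E_t: I, J independent with law lam; sign uniform (only used when I <> J) *)
Definition Et (mu : 'I_n -> R) (eta : R) (f : 'I_n -> 'I_n -> bool -> R) : R :=
  \sum_(i < n) \sum_(j < n) lam mu eta i * lam mu eta j *
    (if i == j then f i j true else (f i j true + f i j false) / 2).

End BanditPCA.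

From HB Require Import structures.
From mathcomp Require Import all_boot all_order all_algebra.
From mathcomp Require Import ring lra.
Import Order.TTheory GRing.Theory Num.Theory.
Local Open Scope ring_scope.

(* Everything is computed in the orthonormal eigenbasis u_1, ..., u_d of W_t
   (the columns of U), in which W u_k = mu_k u_k, W^-1 u_k = u_k / mu_k and
   mu_k > 0.  The only properties of the sampling law lam used are
   lam_i > 0, mu_i <= 2 lam_i and 2 eta mu_i <= lam_i^2 (from gamma <= 1/2),
   and the observed loss satisfies ell^2 <= 1 (||L|| <= 1, |w_t| = 1).
   - Diagonal draw I = J = i: Ltil = a u_i u_i^T, so u_i is an eigenvector of
     M = W^-1 + eta Ltil with eigenvalue 1/mu_i + eta a, where |mu_i eta a| <= 1/2;
     this gives positivity, and lam_i^2 <W - M^-1, Ltil> <= 8 eta ell^2.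
   - Off-diagonal draw I = i <> J = j: Ltil = c (u_i u_j^T + u_j u_i^T), M acts
     on span(u_i, u_j) as a 2x2 matrix with small coupling (eta c)^2 mu_i mu_j
     <= 1/16; solving the 2x2 system gives lam_i lam_j <W - M^-1, Ltil>
     <= (32/15) eta ell^2.
   - Averaging over the sign, ell^2 becomes ((L_ii + L_jj)/2)^2 + L_ij^2 in
     eigen-coordinates; summing over (i, j) and using the basis invariance
     sum_ij L_ij^2 = ||L||_F^2 yields the bound 8 eta d ||L||_F^2.
   The file first proves the scalar inequalities, then general matrix facts,
   then the eigenbasis calculus, the two per-draw bounds and their sum. *)

(* Real inequalities behind the two kinds of draws.  [mu] is an eigenvalue of
   W_t, [la] the corresponding sampling probability, [e] the observed loss. *)
Section ScalarBounds.
Context {R : realFieldType}.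

Lemma lam_bounds {eta mu g : R} : 0 < eta -> 0 < mu -> 0 <= g -> g <= 2^-1 ->
  [/\ 0 < (1 - g) * mu + eta, mu <= 2 * ((1 - g) * mu + eta)
    & 2 * mu * eta <= ((1 - g) * mu + eta) ^+ 2].
Proof.
move=> heta hmu hg0 hg1.
have h1 : 0 <= (1 - g) * mu by apply: mulr_ge0; lra.
have h2 : 0 <= (2^-1 - g) * mu by apply: mulr_ge0; lra.
have h3 : 0 <= (2^-1 - g) * mu * eta by apply: mulr_ge0; lra.
have := sqr_ge0 ((1 - g) * mu - eta).
split; [lra | lra | nra].
Qed.

(* Diagonal draw: the relative perturbation mu * eta * (e / la^2) of the
   eigenvalue 1/mu of W^-1 lies in [-1/2, 1/2]. *)
Lemma diag_perturbation_small {eta mu la e : R} : 0 < eta -> 0 < mu -> 0 < la ->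
  2 * mu * eta <= la ^+ 2 -> e ^+ 2 <= 1 ->
  -2^-1 <= mu * eta * (e / la ^+ 2) /\ mu * eta * (e / la ^+ 2) <= 2^-1.
Proof.
move=> heta hmu hla h2 he.
have hL : 0 < la ^+ 2 by rewrite exprn_gt0.
have hme : 0 < mu * eta by rewrite mulr_gt0.
have e1 : -1 <= e by nra.
have e2 : e <= 1 by nra.
rewrite mulrA; split; [rewrite ler_pdivlMr // | rewrite ler_pdivrMr //]; nra.
Qed.

(* Diagonal draw: with Ltil = a u u^T, a = e / la^2, the weighted gain
   la^2 <W - (W^-1 + eta Ltil)^-1, Ltil> = la^2 a (mu - (1/mu + eta a)^-1)
   is at most 8 eta e^2. *)
Lemma diag_gain_bound {eta mu la e : R} : 0 < eta -> 0 < mu -> 0 < la ->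
  mu <= 2 * la -> 2 * mu * eta <= la ^+ 2 -> e ^+ 2 <= 1 ->
  la ^+ 2 * ((e / la ^+ 2) * (mu - (mu^-1 + eta * (e / la ^+ 2))^-1))
    <= 8 * eta * e ^+ 2.
Proof.
move=> heta hmu hla hmla h2 he.
have [t1 t2] := diag_perturbation_small heta hmu hla h2 he.
set t := mu * eta * (e / la ^+ 2) in t1 t2.
have hL : 0 < la ^+ 2 by rewrite exprn_gt0.
have ht : 0 < 1 + t by lra.
have -> : mu^-1 + eta * (e / la ^+ 2) = (1 + t) / mu.
  by rewrite /t; field; rewrite !gt_eqF.
rewrite invf_div.
have hden : 0 < la ^+ 2 + mu * eta * e.
  by move: t1; rewrite /t mulrA ler_pdivlMr // => ?; lra.
have -> : la ^+ 2 * ((e / la ^+ 2) * (mu - mu / (1 + t)))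
        = (eta * e ^+ 2) * mu ^+ 2 / (la ^+ 2 * (1 + t)).
  by rewrite /t; field; rewrite !gt_eqF.
rewrite ler_pdivrMr ?mulr_gt0 // -[8 * eta * e ^+ 2]mulrA.
have hmu2 : mu ^+ 2 <= 4 * la ^+ 2 by nra.
have hE : 0 <= eta * e ^+ 2 by rewrite mulr_ge0 ?sqr_ge0 // ltW.
have k1 : 0 <= (eta * e ^+ 2) * (la ^+ 2 * (1 + t) - la ^+ 2 / 2).
  by apply: mulr_ge0 => //; nra.
have k2 : 0 <= (eta * e ^+ 2) * (4 * la ^+ 2 - mu ^+ 2) by apply: mulr_ge0 => //; lra.
move: k1 k2 hE; move: (eta * e ^+ 2) (la ^+ 2 * (1 + t)) (la ^+ 2) (mu ^+ 2) => E F G H.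
nra.
Qed.

(* Off-diagonal draw: with coupling z = eta * c, c = s e / (2 l1 l2), the
   2x2 block of eta Ltil relative to W^-1 satisfies z^2 mu1 mu2 <= 1/16. *)
Lemma offdiag_coupling_small {eta mu1 mu2 l1 l2 e s : R} :
  0 < eta -> 0 < mu1 -> 0 < mu2 -> 0 < l1 -> 0 < l2 ->
  2 * mu1 * eta <= l1 ^+ 2 -> 2 * mu2 * eta <= l2 ^+ 2 -> e ^+ 2 <= 1 -> s ^+ 2 = 1 ->
  (eta * (s * e / (2 * l1 * l2))) ^+ 2 * mu1 * mu2 <= 16^-1.
Proof.
move=> heta hm1 hm2 hl1 hl2 h1 h2 he hs.
have hL1 : 0 < l1 ^+ 2 by rewrite exprn_gt0.
have hL2 : 0 < l2 ^+ 2 by rewrite exprn_gt0.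
have -> : (eta * (s * e / (2 * l1 * l2))) ^+ 2 * mu1 * mu2
   = s ^+ 2 * (e ^+ 2 / 4) * ((eta * mu1 / l1 ^+ 2) * (eta * mu2 / l2 ^+ 2)).
  by field; rewrite !gt_eqF.
have ratio_small (m l : R) : 0 < m -> 0 < l ^+ 2 -> 2 * m * eta <= l ^+ 2 ->
    0 <= eta * m / l ^+ 2 <= 2^-1.
  move=> hm hl hml; apply/andP; split.
    by apply: divr_ge0; [exact: mulr_ge0 (ltW heta) (ltW hm) | exact: ltW].
  by rewrite ler_pdivrMr //; lra.
move: (ratio_small _ _ hm1 hL1 h1) (ratio_small _ _ hm2 hL2 h2) (sqr_ge0 e) he.
rewrite hs mul1r.
move: (eta * mu1 / l1 ^+ 2) (eta * mu2 / l2 ^+ 2) (e ^+ 2) => a b c.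
move=> /andP[a0 a1] /andP[b0 b1] c0 c1.
have hab : 0 <= a * b <= 4^-1 by apply/andP; split; nra.
nra.
Qed.

(* A small coupling cannot destroy positivity: the cross term z (2 x y) is
   bounded below by half of the diagonal form x^2/m1 + y^2/m2. *)
Lemma offdiag_cross_term_lower {z m1 m2 x y : R} :
  0 < m1 -> 0 < m2 -> z ^+ 2 * m1 * m2 <= 16^-1 ->
  - (2^-1 * (x ^+ 2 / m1 + y ^+ 2 / m2)) <= z * (x * y + y * x).
Proof.
move=> hm1 hm2 hz.
have -> : x ^+ 2 / m1 = m1 * (x / m1) ^+ 2 by field; rewrite gt_eqF.
have -> : y ^+ 2 / m2 = m2 * (y / m2) ^+ 2 by field; rewrite gt_eqF.
have -> : z * (x * y + y * x) = 2 * z * m1 * m2 * ((x / m1) * (y / m2)).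
  by field; rewrite !gt_eqF.
move: (x / m1) (y / m2) => a b.
suff : 0 <= m1 * a ^+ 2 + m2 * b ^+ 2 + 4 * z * m1 * m2 * (a * b) by lra.
rewrite -(pmulr_rge0 _ hm1).
have -> : m1 * (m1 * a ^+ 2 + m2 * b ^+ 2 + 4 * z * m1 * m2 * (a * b))
   = (m1 * a + 2 * z * m1 * m2 * b) ^+ 2
     + (m1 * m2 * b ^+ 2) * (1 - 4 * (z ^+ 2 * m1 * m2)) by ring.
apply: addr_ge0; first exact: sqr_ge0.
by apply: mulr_ge0; [rewrite mulr_ge0 ?sqr_ge0 // mulr_ge0 // ltW | lra].
Qed.

(* The 2x2 inverse: if (al, be; ga, de) are the entries of X restricted to
   span(u_i, u_j) and X M = 1 with M = (1/m1, z; z, 1/m2), then the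
   off-diagonal entries sum to -2 z m1 m2 / (1 - z^2 m1 m2). *)
Lemma offdiag_inverse_entries {z m1 m2 al be ga de : R} :
  0 < m1 -> 0 < m2 -> 1 - z ^+ 2 * m1 * m2 != 0 ->
  1 = ga / m1 + z * be -> 0 = al / m1 + z * de ->
  0 = be / m2 + z * ga -> 1 = de / m2 + z * al ->
  al + be = - (2 * z * m1 * m2) / (1 - z ^+ 2 * m1 * m2).
Proof.
move=> hm1 hm2 hK e1 e2 e3 e4.
have hm1' : m1 != 0 by rewrite gt_eqF.
have hm2' : m2 != 0 by rewrite gt_eqF.
have ha : al * (1 - z ^+ 2 * m1 * m2) = - (z * m1 * m2).
  have -> : al * (1 - z ^+ 2 * m1 * m2)
          = (al / m1 + z * de) * m1 - z * m1 * ((de / m2 + z * al) * m2).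
    by field; rewrite hm1' hm2'.
  by rewrite -e2 -e4; ring.
have hb : be * (1 - z ^+ 2 * m1 * m2) = - (z * m1 * m2).
  have -> : be * (1 - z ^+ 2 * m1 * m2)
          = (be / m2 + z * ga) * m2 - z * m2 * ((ga / m1 + z * be) * m1).
    by field; rewrite hm1' hm2'.
  by rewrite -e3 -e1; ring.
by apply: (mulIf hK); rewrite mulrDl ha hb mulfVK //; ring.
Qed.

(* Off-diagonal draw: with Ltil = c (u_i u_j^T + u_j u_i^T) the weighted gain
   l1 l2 <W - M^-1, Ltil> = l1 l2 c (2 z mu1 mu2 / (1 - z^2 mu1 mu2)), z = eta c,
   is at most (32/15) eta e^2. *)
Lemma offdiag_gain_bound {eta mu1 mu2 l1 l2 e s c : R} :
  0 < eta -> 0 < mu1 -> 0 < mu2 -> 0 < l1 -> 0 < l2 ->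
  mu1 <= 2 * l1 -> mu2 <= 2 * l2 ->
  2 * mu1 * eta <= l1 ^+ 2 -> 2 * mu2 * eta <= l2 ^+ 2 -> e ^+ 2 <= 1 -> s ^+ 2 = 1 ->
  c = s * e / (2 * l1 * l2) ->
  l1 * l2 * (c * (2 * (eta * c) * mu1 * mu2 / (1 - (eta * c) ^+ 2 * mu1 * mu2)))
    <= 32 / 15 * eta * e ^+ 2.
Proof.
move=> heta hm1 hm2 hl1 hl2 hml1 hml2 h1 h2 he hs hc.
have hz := offdiag_coupling_small heta hm1 hm2 hl1 hl2 h1 h2 he hs.
rewrite -hc in hz.
have hK : 15 / 16 <= 1 - (eta * c) ^+ 2 * mu1 * mu2 by lra.
move: hK; move: (1 - (eta * c) ^+ 2 * mu1 * mu2) => K hK.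
have hKp : 0 < K by lra.
have -> : l1 * l2 * (c * (2 * (eta * c) * mu1 * mu2 / K))
   = (s ^+ 2 * (eta * e ^+ 2) * (mu1 * mu2) / (2 * (l1 * l2))) / K.
  by rewrite hc; field; rewrite !gt_eqF.
rewrite hs mul1r ler_pdivrMr //.
have hE : 0 <= eta * e ^+ 2 by rewrite mulr_ge0 ?sqr_ge0 // ltW.
have hl12 : 0 < 2 * (l1 * l2) by rewrite !mulr_gt0.
have hN : (eta * e ^+ 2) * (mu1 * mu2) / (2 * (l1 * l2)) <= 2 * (eta * e ^+ 2).
  rewrite ler_pdivrMr //.
  have : mu1 * mu2 <= 4 * (l1 * l2) by nra.
  nra.
have hN0 : 0 <= (eta * e ^+ 2) * (mu1 * mu2) / (2 * (l1 * l2)).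
  apply: divr_ge0; last exact: ltW.
  by apply: mulr_ge0 hE (mulr_ge0 (ltW hm1) (ltW hm2)).
rewrite -[32 / 15 * eta * e ^+ 2]mulrA.
move: hN hN0 hE; move: ((eta * e ^+ 2) * (mu1 * mu2) / (2 * (l1 * l2))) (eta * e ^+ 2).
move=> N E; nra.
Qed.

End ScalarBounds.

Section MatrixFacts.
Context {R : rcfType}.

Lemma trmxD m p (A B : 'M[R]_(m, p)) : (A + B)^T = A^T + B^T.
Proof. exact: linearD. Qed.
Lemma trmxN m p (A : 'M[R]_(m, p)) : (- A)^T = - A^T.
Proof. exact: linearN. Qed.
Lemma trmxZ m p (a : R) (A : 'M[R]_(m, p)) : (a *: A)^T = a *: A^T.
Proof. exact: linearZ. Qed.

Lemma mulmx_scalel m n p a (A : 'M[R]_(m, n)) (B : 'M[R]_(n, p)) :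
  (a *: A) *m B = a *: (A *m B).
Proof. by rewrite scalemxAl. Qed.
Lemma mulmx_scaler m n p a (A : 'M[R]_(m, n)) (B : 'M[R]_(n, p)) :
  A *m (a *: B) = a *: (A *m B).
Proof. by rewrite scalemxAr. Qed.

(* Entries of sums, opposites and scalings; unlike mxE these rules never
   expand matrix products into sums. *)
Lemma entryD m p (A B : 'M[R]_(m, p)) i j : (A + B) i j = A i j + B i j.
Proof. by rewrite mxE. Qed.
Lemma entryN m p (A : 'M[R]_(m, p)) i j : (- A) i j = - A i j.
Proof. by rewrite mxE. Qed.
Lemma entryZ m p a (A : 'M[R]_(m, p)) i j : (a *: A) i j = a * A i j.
Proof. by rewrite mxE. Qed.

Lemma entry11_tr (x : 'M[R]_1) : x^T 0 0 = x 0 0.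
Proof. by rewrite mxE. Qed.

Lemma entry11_mul (x y : 'M[R]_1) : (x *m y) 0 0 = x 0 0 * y 0 0.
Proof. by rewrite mxE big_ord1. Qed.

Lemma mulmx_col11 n (v : 'cV[R]_n) (y : 'M[R]_1) : v *m y = y 0 0 *: v.
Proof. by rewrite {1}(mx11_scalar y) mul_mx_scalar. Qed.

Lemma row_col_entry m n p (A : 'M[R]_(m, n)) (B : 'M[R]_(n, p)) i j :
  (row i A *m col j B) 0 0 = (A *m B) i j.
Proof. by rewrite !mxE; apply: eq_bigr => k _; rewrite !mxE. Qed.

Context {n : nat}.
Implicit Types (A B : 'M[R]_n) (v w y : 'cV[R]_n).

Lemma dotC v w : (v^T *m w) 0 0 = (w^T *m v) 0 0.
Proof. by rewrite -entry11_tr trmx_mul trmxK. Qed.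

Lemma dot_self_ge0 v : 0 <= (v^T *m v) 0 0.
Proof. rewrite mxE; apply: sumr_ge0 => k _; rewrite mxE -expr2; exact: sqr_ge0. Qed.

(* Cauchy-Schwarz against a unit vector, from 0 <= |y - <w,y> w|^2. *)
Lemma cauchy_schwarz_unit w y :
  (w^T *m w) 0 0 = 1 -> ((w^T *m y) 0 0) ^+ 2 <= (y^T *m y) 0 0.
Proof.
move=> hw; set t := (w^T *m y) 0 0.
have := dot_self_ge0 (y - t *: w).
rewrite trmxD trmxN trmxZ !mulmxDl !mulmxDr !mulNmx !mulmxN -!scalemxAl -!scalemxAr.
rewrite !(entryD, entryN, entryZ) -/t hw (dotC y w) -/t.
nra.
Qed.

Lemma mxtrace_mul_outer A (p q : 'cV[R]_n) : \tr (A *m (p *m q^T)) = (q^T *m A *m p) 0 0.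
Proof. by rewrite mulmxA mxtrace_mulC trace_mx11 mulmxA. Qed.

Lemma frob_inner_symmetric A B : A^T = A -> frob_inner A B = \tr (A *m B).
Proof. by move=> hA; rewrite /frob_inner hA. Qed.

Lemma frob_norm2_tr A : frob_norm2 A = \tr (A^T *m A).
Proof.
rewrite /frob_norm2 /mxtrace exchange_big; apply: eq_bigr => j _; rewrite mxE.
by apply: eq_bigr => i _; rewrite mxE expr2.
Qed.

Lemma posdef_unit A : posdef A -> A \in unitmx.
Proof.
move=> [_ pd]; rewrite unitmxE unitfE; apply/negP => /det0P [v nz hv].
have : v^T != 0 by apply: contra nz => /eqP h; rewrite -(trmxK v) h linear0.
by move/pd; rewrite trmxK hv mul0mx mxE ltxx.
Qed.

Lemma posdef_inv {A : 'M[R]_n} : posdef A -> (invmx A)^T = invmx A /\ invmx A *m A = 1%:M.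
Proof. by move=> hA; rewrite trmx_inv hA.1 mulVmx //; exact: posdef_unit. Qed.

End MatrixFacts.

Lemma sum_ge_term {R : numDomainType} {I : finType} (f : I -> R) k :
  (forall i, 0 <= f i) -> f k <= \sum_i f i.
Proof. by move=> hf; rewrite (bigD1 k) //= lerDl; exact: sumr_ge0. Qed.

Lemma sum_ge_two_terms {R : numDomainType} {I : finType} (f : I -> R) k l :
  k != l -> (forall i, 0 <= f i) -> f k + f l <= \sum_i f i.
Proof.
move=> hkl hf; rewrite (bigD1 k) //= lerD2l (bigD1 l) 1?eq_sym //= lerDl.
exact: sumr_ge0.
Qed.
(* Calculus in the orthonormal basis u_1, ..., u_d formed by the columns of U. *)
Section Eigenbasis.
Context {R : rcfType} {d : nat} {U : 'M[R]_d}.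
Hypothesis hU : U^T *m U = 1%:M.
Local Notation u i := (ucol U i).

Lemma ucol_dot i j : (u i)^T *m u j = (i == j)%:R%:M.
Proof.
apply/matrixP => a b; rewrite !ord1 /ucol tr_col row_col_entry hU !mxE.
by case: (i == j); rewrite ?mulr1n ?mulr0n.
Qed.

Lemma ucol_dot00 i j : ((u i)^T *m u j) 0 0 = (i == j)%:R.
Proof. by rewrite ucol_dot mxE mulr1n. Qed.

Lemma sum_ucol_outer : \sum_i u i *m (u i)^T = 1%:M.
Proof.
rewrite -(mulmx1C hU); apply/matrixP => a b; rewrite summxE !mxE.
by apply: eq_bigr => k _; rewrite !mxE big_ord1 !mxE.
Qed.

Definition coord (v : 'cV[R]_d) i : R := ((u i)^T *m v) 0 0.

Lemma coord_decomp v : v = \sum_k coord v k *: u k.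
Proof.
rewrite -{1}(mul1mx v) -sum_ucol_outer mulmx_suml; apply: eq_bigr => k _.
by rewrite -mulmxA mulmx_col11.
Qed.

Lemma dot_ucol v k : (v^T *m u k) 0 0 = coord v k.
Proof. exact: dotC. Qed.

Lemma coord_eq0 v : (forall k, coord v k = 0) -> v = 0.
Proof. by move=> h; rewrite (coord_decomp v); apply: big1 => k _; rewrite h scale0r. Qed.

Lemma quad_outer v k l : (v^T *m (u k *m (u l)^T) *m v) 0 0 = coord v k * coord v l.
Proof. by rewrite mulmxA -mulmxA entry11_mul dot_ucol. Qed.

Lemma quad_comb (A : 'M[R]_d) (a b : 'cV[R]_d) r s :
  ((r *: (a + s *: b))^T *m A *m (r *: (a + s *: b))) 0 0 =
  r ^+ 2 * ((a^T *m A *m a) 0 0 + s * (a^T *m A *m b) 0 0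
            + s * (b^T *m A *m a) 0 0 + s ^+ 2 * (b^T *m A *m b) 0 0).
Proof.
rewrite !(trmxZ, trmxD) !(mulmx_scalel, mulmx_scaler, mulmxDl, mulmxDr).
rewrite !(entryD, entryZ).
move: ((a^T *m A *m a) 0 0) ((a^T *m A *m b) 0 0) ((b^T *m A *m a) 0 0).
by move: ((b^T *m A *m b) 0 0) => x4 x1 x2 x3; ring.
Qed.

Lemma sgn_sq b : sgn R b ^+ 2 = 1.
Proof. by case: b; rewrite /sgn ?expr1n ?sqrrN ?expr1n. Qed.

Lemma inv_sqrt2_sq : (Num.sqrt (2 : R))^-1 ^+ 2 = 2^-1.
Proof. by rewrite exprVn sqr_sqrtr // ler0n. Qed.

Lemma wvec_unit i j b : ((wvec U i j b)^T *m wvec U i j b) 0 0 = 1.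
Proof.
rewrite /wvec; case: eqP => [->|/eqP hij]; first by rewrite ucol_dot00 eqxx.
have := quad_comb 1%:M (u i) (u j) (Num.sqrt 2)^-1 (sgn R b).
rewrite !mulmx1 => ->; rewrite inv_sqrt2_sq !ucol_dot00 !eqxx (negbTE hij).
rewrite eq_sym (negbTE hij) sgn_sq !mulr0 !addr0 mul1r -natrD mulVf //.
by rewrite pnatr_eq0.
Qed.

Context {W : 'M[R]_d} {mu : 'I_d -> R}.
Hypothesis hW : W = \sum_(i < d) mu i *: (u i *m (u i)^T).
Hypothesis hWpd : posdef W.

Lemma W_ucol k : W *m u k = mu k *: u k.
Proof.
rewrite hW mulmx_suml (bigD1 k) //= big1 ?addr0.
  by rewrite -scalemxAl -mulmxA ucol_dot eqxx mul_mx_scalar scale1r.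
move=> i hik.
by rewrite -scalemxAl -mulmxA ucol_dot (negbTE hik) mul_mx_scalar scale0r scaler0.
Qed.

Lemma W_form k l : ((u k)^T *m W *m u l) 0 0 = mu l * (k == l)%:R.
Proof. by rewrite -mulmxA W_ucol mulmx_scaler entryZ ucol_dot00. Qed.

Lemma mu_pos k : 0 < mu k.
Proof.
have nz : u k != 0.
  apply/negP => /eqP h; have := ucol_dot00 k k; rewrite h mulmx0 mxE eqxx => /eqP.
  by rewrite eq_sym oner_eq0.
by have := hWpd.2 _ nz; rewrite -mulmxA W_ucol mulmx_scaler entryZ ucol_dot00 eqxx mulr1.
Qed.

Lemma invW_ucol k : invmx W *m u k = (mu k)^-1 *: u k.
Proof.
have h : u k = mu k *: (invmx W *m u k).
  by rewrite scalemxAr -W_ucol mulmxA mulVmx ?mul1mx // posdef_unit.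
by rewrite {2}h scalerA mulVf ?scale1r // gt_eqF // mu_pos.
Qed.

Lemma invW_form v : (v^T *m invmx W *m v) 0 0 = \sum_k coord v k ^+ 2 / mu k.
Proof.
rewrite {2}(coord_decomp v) mulmx_sumr summxE; apply: eq_bigr => k _.
rewrite -scalemxAr -mulmxA invW_ucol -scalemxAr !entryZ dot_ucol.
by field; rewrite gt_eqF // mu_pos.
Qed.

Lemma invW_form_term_ge0 v k : 0 <= coord v k ^+ 2 / mu k.
Proof. by rewrite divr_ge0 ?sqr_ge0 // ltW // mu_pos. Qed.

Lemma invW_form_pos v : v != 0 -> 0 < \sum_k coord v k ^+ 2 / mu k.
Proof.
move=> nz; have [k hk] : exists k, coord v k != 0.
  case: (boolP [exists k, coord v k != 0]) => [/existsP //|/existsPn h].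
  by case/negP: nz; apply/eqP/coord_eq0 => k; apply/eqP; move: (h k); rewrite negbK.
apply: lt_le_trans (sum_ge_term _ k (invW_form_term_ge0 v)).
by rewrite divr_gt0 ?exprn_even_gt0 ?mu_pos.
Qed.

Lemma perturbed_posdef (eta : R) (B : 'M[R]_d) : B^T = B ->
  (forall v, - (2^-1 * \sum_k coord v k ^+ 2 / mu k) <= eta * (v^T *m B *m v) 0 0) ->
  posdef (invmx W + eta *: B).
Proof.
move=> hB hq; split; first by rewrite trmxD trmxZ trmx_inv hWpd.1 hB.
move=> v nz; rewrite mulmxDr mulmxDl entryD -scalemxAr -scalemxAl entryZ invW_form.
by have := invW_form_pos v nz; have := hq v; lra.
Qed.

Context {L : 'M[R]_d}.
Hypothesis hL : L^T = L.
Hypothesis hLs : spec_norm_le1 L.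

Definition Leig i j : R := ((u i)^T *m L *m u j) 0 0.

Lemma Leig_sym i j : Leig i j = Leig j i.
Proof. by rewrite /Leig -entry11_tr !trmx_mul trmxK hL mulmxA. Qed.

Lemma ell_diag i b : ell U L i i b = Leig i i.
Proof. by rewrite /ell /wvec eqxx. Qed.

Lemma ell_offdiag i j b : i != j ->
  ell U L i j b = (Leig i i + Leig j j) / 2 + sgn R b * Leig i j.
Proof.
move=> hij; rewrite /ell /wvec (negbTE hij) quad_comb inv_sqrt2_sq.
by rewrite -/(Leig i i) -/(Leig i j) -/(Leig j i) -/(Leig j j) sgn_sq (Leig_sym j i); field.
Qed.

(* |ell_t| <= 1 since w_t is a unit vector and ||L|| <= 1. *)
Lemma ell_sq_le1 i j b : ell U L i j b ^+ 2 <= 1.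
Proof.
rewrite /ell -mulmxA; apply: le_trans (cauchy_schwarz_unit _ _ (wvec_unit i j b)) _.
by have := hLs (wvec U i j b); rewrite wvec_unit.
Qed.

(* The Frobenius norm is invariant under the orthogonal change of basis. *)
Lemma frob_norm2_eig : frob_norm2 L = \sum_i \sum_j Leig i j ^+ 2.
Proof.
have hUU := mulmx1C hU.
have -> : \sum_i \sum_j Leig i j ^+ 2 = frob_norm2 (U^T *m L *m U).
  apply: eq_bigr => i _; apply: eq_bigr => j _.
  by rewrite /Leig /ucol tr_col -row_mul row_col_entry.
rewrite !frob_norm2_tr.
have -> : (U^T *m L *m U)^T *m (U^T *m L *m U) = U^T *m (L^T *m L) *m U.
  by rewrite !trmx_mul trmxK !mulmxA -(mulmxA (U^T *m L^T) U) hUU mulmx1.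
by rewrite [RHS]mxtrace_mulC !mulmxA hUU mul1mx.
Qed.

Section OneRound.
Context {eta : R}.
Hypotheses (hd : (2 <= d)%N) (heta : 0 < eta) (heta_small : eta <= (2 * d%:R)^-1).
Local Notation la i := (lam mu eta i).

Lemma lam_spec i : [/\ 0 < la i, mu i <= 2 * la i & 2 * mu i * eta <= la i ^+ 2].
Proof.
have hd0 : 0 < d%:R :> R by rewrite ltr0n; apply: leq_trans hd.
have hg : eta * d%:R <= 2^-1.
  by move: heta_small; rewrite -div1r ler_pdivlMr ?mulr_gt0 // => h; lra.
have -> : la i = (1 - eta * d%:R) * mu i + eta by rewrite /lam; field; rewrite gt_eqF.
exact: lam_bounds heta (mu_pos i) (mulr_ge0 (ltW heta) (ltW hd0)) hg.
Qed.

Lemma lam_pos i : 0 < la i. Proof. by case: (lam_spec i). Qed.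
Lemma lam_ge_half_mu i : mu i <= 2 * la i. Proof. by case: (lam_spec i). Qed.
Lemma lam_sq_ge i : 2 * mu i * eta <= la i ^+ 2. Proof. by case: (lam_spec i). Qed.

(* Diagonal draw I = J = i: Ltil = a u_i u_i^T with a = ell / la_i^2, and
   the perturbation eta a of the eigenvalue 1/mu_i of W^-1 is at most 1/(2 mu_i). *)
Lemma diag_draw_posdef i b : posdef (invmx W + eta *: Ltil U mu eta L i i b).
Proof.
set a := ell U L i i b / la i ^+ 2.
have hLt : Ltil U mu eta L i i b = a *: (u i *m (u i)^T) by rewrite /Ltil eqxx.
have [ht _] := diag_perturbation_small heta (mu_pos i) (lam_pos i) (lam_sq_ge i)
  (ell_sq_le1 i i b).
apply: perturbed_posdef; first by rewrite hLt trmxZ trmx_mul trmxK.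
move=> v; rewrite hLt mulmx_scaler mulmx_scalel entryZ quad_outer.
have hs := sum_ge_term _ i (invW_form_term_ge0 v); rewrite /= in hs.
have -> : eta * (a * (coord v i * coord v i))
        = (mu i * eta * a) * (coord v i ^+ 2 / mu i).
  by field; rewrite gt_eqF // mu_pos.
move: hs (invW_form_term_ge0 v i) ht; rewrite -/a.
move: (coord v i ^+ 2 / mu i) (mu i * eta * a) (\sum_k coord v k ^+ 2 / mu k).
move=> q t S hqS hq ht.
have : 0 <= (t + 2^-1) * q by rewrite mulr_ge0 //; lra.
lra.
Qed.

(* The diagonal gain: u_i is an eigenvector of M = W^-1 + eta Ltil with
   eigenvalue k = 1/mu_i + eta a, hence of M^-1 with eigenvalue 1/k, and
   <W - M^-1, Ltil> = a (mu_i - 1/k). *)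
Lemma diag_draw_gain i b :
  la i ^+ 2 * frob_inner (W - invmx (invmx W + eta *: Ltil U mu eta L i i b))
                         (Ltil U mu eta L i i b)
    <= 8 * eta * Leig i i ^+ 2.
Proof.
set a := ell U L i i b / la i ^+ 2.
have hLt : Ltil U mu eta L i i b = a *: (u i *m (u i)^T) by rewrite /Ltil eqxx.
have [hXs hXM] := posdef_inv (diag_draw_posdef i b).
set M := invmx W + eta *: Ltil U mu eta L i i b in hXs hXM *.
set X := invmx M in hXs hXM *.
set k := (mu i)^-1 + eta * a.
have hk : k != 0.
  have [ht _] := diag_perturbation_small heta (mu_pos i) (lam_pos i) (lam_sq_ge i)
    (ell_sq_le1 i i b).
  rewrite -/a in ht.
  have -> : k = (1 + mu i * eta * a) / mu i by rewrite /k; field; rewrite gt_eqF // mu_pos.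
  by rewrite gt_eqF // divr_gt0 ?mu_pos //; lra.
have hMu : M *m u i = k *: u i.
  rewrite /M mulmxDl invW_ucol hLt !mulmx_scalel -mulmxA ucol_dot eqxx.
  by rewrite mul_mx_scalar scale1r scalerA -scalerDl.
have hXu : X *m u i = k^-1 *: u i.
  have h : u i = k *: (X *m u i) by rewrite -mulmx_scaler -hMu mulmxA hXM mul1mx.
  by rewrite {2}h scalerA mulVf ?scale1r.
have hsym : (W - X)^T = W - X by rewrite trmxD trmxN hWpd.1 hXs.
rewrite frob_inner_symmetric // hLt mulmx_scaler mxtraceZ mxtrace_mul_outer.
rewrite mulmxBr mulmxBl entryD entryN W_form eqxx mulr1.
rewrite -mulmxA hXu mulmx_scaler entryZ ucol_dot00 eqxx mulr1 -(ell_diag i b).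
exact: diag_gain_bound heta (mu_pos i) (lam_pos i) (lam_ge_half_mu i) (lam_sq_ge i)
  (ell_sq_le1 i i b).
Qed.

Lemma offdiag_coupling i j b :
  (eta * (sgn R b * ell U L i j b / (2 * la i * la j))) ^+ 2 * mu i * mu j <= 16^-1.
Proof.
exact: offdiag_coupling_small heta (mu_pos i) (mu_pos j) (lam_pos i) (lam_pos j)
  (lam_sq_ge i) (lam_sq_ge j) (ell_sq_le1 i j b) (sgn_sq b).
Qed.

Lemma offdiag_draw_posdef i j b : i != j ->
  posdef (invmx W + eta *: Ltil U mu eta L i j b).
Proof.
move=> hij.
set c := sgn R b * ell U L i j b / (2 * la i * la j).
have hLt : Ltil U mu eta L i j b = c *: (u i *m (u j)^T + u j *m (u i)^T).
  by rewrite /Ltil (negbTE hij).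
have hz := offdiag_coupling i j b; rewrite -/c in hz.
apply: perturbed_posdef; first by rewrite hLt trmxZ trmxD !trmx_mul !trmxK addrC.
move=> v; rewrite hLt mulmx_scaler mulmx_scalel entryZ mulmxDr mulmxDl entryD.
rewrite !quad_outer mulrA.
have hs := sum_ge_two_terms _ _ _ hij (invW_form_term_ge0 v); rewrite /= in hs.
have := offdiag_cross_term_lower (x := coord v i) (y := coord v j) (mu_pos i) (mu_pos j) hz.
lra.
Qed.

(* The off-diagonal gain: M maps span(u_i, u_j) to itself, so X = M^-1
   restricted to it solves the 2x2 system of offdiag_inverse_entries, and
   <W - X, Ltil> = -2 c u_i^T X u_j. *)
Lemma offdiag_draw_gain i j b : i != j ->
  la i * la j * frob_inner (W - invmx (invmx W + eta *: Ltil U mu eta L i j b))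
                           (Ltil U mu eta L i j b)
    <= 32 / 15 * eta * ell U L i j b ^+ 2.
Proof.
move=> hij; have hji : j != i by rewrite eq_sym.
set c := sgn R b * ell U L i j b / (2 * la i * la j).
set S := u i *m (u j)^T + u j *m (u i)^T.
have hLt : Ltil U mu eta L i j b = c *: S by rewrite /Ltil (negbTE hij).
have hz := offdiag_coupling i j b; rewrite -/c in hz.
have [hXs hXM] := posdef_inv (offdiag_draw_posdef _ _ b hij).
set M := invmx W + eta *: Ltil U mu eta L i j b in hXs hXM *.
set X := invmx M in hXs hXM *.
have hSi : S *m u i = u j.
  by rewrite mulmxDl -!mulmxA !ucol_dot eqxx (negbTE hji) !mul_mx_scalar scale0r add0r scale1r.
have hSj : S *m u j = u i.
  by rewrite mulmxDl -!mulmxA !ucol_dot eqxx (negbTE hij) !mul_mx_scalar scale0r addr0 scale1r.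
have hMi : M *m u i = (mu i)^-1 *: u i + (eta * c) *: u j.
  by rewrite /M mulmxDl invW_ucol hLt !mulmx_scalel hSi scalerA.
have hMj : M *m u j = (mu j)^-1 *: u j + (eta * c) *: u i.
  by rewrite /M mulmxDl invW_ucol hLt !mulmx_scalel hSj scalerA.
have e1 : u i = (mu i)^-1 *: (X *m u i) + (eta * c) *: (X *m u j).
  by rewrite -!mulmx_scaler -mulmxDr -hMi mulmxA hXM mul1mx.
have e2 : u j = (mu j)^-1 *: (X *m u j) + (eta * c) *: (X *m u i).
  by rewrite -!mulmx_scaler -mulmxDr -hMj mulmxA hXM mul1mx.
have f1 := congr1 (fun w => ((u i)^T *m w) 0 0) e1.
have f2 := congr1 (fun w => ((u j)^T *m w) 0 0) e1.
have f3 := congr1 (fun w => ((u i)^T *m w) 0 0) e2.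
have f4 := congr1 (fun w => ((u j)^T *m w) 0 0) e2.
rewrite /= !mulmxDr !mulmx_scaler !entryD !entryZ !ucol_dot00 !eqxx in f1 f2 f3 f4.
rewrite (negbTE hij) (negbTE hji) !mulmxA !(mulrC (mu _)^-1) in f1 f2 f3 f4.
have hK : 1 - (eta * c) ^+ 2 * mu i * mu j != 0 by rewrite gt_eqF //; lra.
have hab := offdiag_inverse_entries (mu_pos i) (mu_pos j) hK f1 f2 f3 f4.
have hsym : (W - X)^T = W - X by rewrite trmxD trmxN hWpd.1 hXs.
rewrite frob_inner_symmetric // hLt mulmx_scaler mxtraceZ /S mulmxDr mxtraceD.
rewrite !mxtrace_mul_outer !mulmxBr !mulmxBl !entryD !entryN !W_form.
rewrite (negbTE hij) (negbTE hji) !mulr0 !add0r -opprD hab mulNr opprK.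
exact: offdiag_gain_bound heta (mu_pos i) (mu_pos j) (lam_pos i) (lam_pos j)
  (lam_ge_half_mu i) (lam_ge_half_mu j) (lam_sq_ge i) (lam_sq_ge j) (ell_sq_le1 i j b)
  (sgn_sq b) erefl.
Qed.

Definition gain i j b : R :=
  frob_inner (W - invmx (invmx W + eta *: Ltil U mu eta L i j b)) (Ltil U mu eta L i j b).

(* Contribution of the pair (i, j) to E_t: for i <> j, averaging ell^2 over
   the sign s gives ((L_ii + L_jj)/2)^2 + L_ij^2. *)
Lemma pair_gain_bound i j :
  la i * la j * (if i == j then gain i j true else (gain i j true + gain i j false) / 2)
  <= eta * (2 * (Leig i i ^+ 2 + Leig j j ^+ 2) + 8 * Leig i j ^+ 2).
Proof.
case: (eqVneq i j) => [<-|hij].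
  rewrite -expr2; apply: le_trans (diag_draw_gain i true) _.
  by have := mulr_ge0 (ltW heta) (sqr_ge0 (Leig i i)); lra.
have := offdiag_draw_gain _ _ true hij; have := offdiag_draw_gain _ _ false hij.
rewrite !ell_offdiag // /sgn -/(gain i j true) -/(gain i j false).
have -> : la i * la j * ((gain i j true + gain i j false) / 2)
        = (la i * la j * gain i j true + la i * la j * gain i j false) / 2 by ring.
move: (la i * la j * gain i j true) (la i * la j * gain i j false) => x y.
move: (Leig i i) (Leig j j) (Leig i j) => A B H hy hx.
have k1 := mulr_ge0 (ltW heta) (sqr_ge0 (A - B)).
have k2 := mulr_ge0 (ltW heta) (sqr_ge0 (A + B)).
have k3 := mulr_ge0 (ltW heta) (sqr_ge0 H).
lra.
Qed.

(* Summing the pair bounds: with D = sum_i L_ii^2 <= T = sum_ij L_ij^2 the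
   total is eta (4 d D + 8 T) <= 8 eta d T, as d >= 2. *)
Lemma expected_gain_bound : Et mu eta gain <= 8 * eta * d%:R * \sum_i \sum_j Leig i j ^+ 2.
Proof.
apply: le_trans (ler_sum _ (fun i _ => ler_sum _ (fun j _ => pair_gain_bound i j))) _.
set T := \sum_i \sum_j Leig i j ^+ 2.
set D := \sum_i Leig i i ^+ 2.
have hDT : D <= T.
  by apply: ler_sum => i _; exact: (sum_ge_term (fun j => Leig i j ^+ 2) i (fun j => sqr_ge0 _)).
have -> : \sum_i \sum_j eta * (2 * (Leig i i ^+ 2 + Leig j j ^+ 2) + 8 * Leig i j ^+ 2)
   = eta * (2 * (d%:R * D) + 2 * (d%:R * D) + 8 * T).
  under eq_bigr => i _ do rewrite -mulr_sumr.
  rewrite -mulr_sumr; congr (_ * _).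
  under eq_bigr => i _ do rewrite big_split /= -!mulr_sumr big_split /= sumr_const card_ord.
  rewrite big_split /= -mulr_sumr big_split /= -!mulr_sumr sumr_const card_ord.
  by rewrite sumrMnl -/D -/T -mulr_natl; ring.
have hD : 0 <= D by apply: sumr_ge0 => i _; exact: sqr_ge0.
have hd2 : 2 <= d%:R :> R by rewrite (ler_nat R 2 d).
have k1 := mulr_ge0 (ltW heta) hD.
have k2 : 0 <= eta * (T - D) by apply: mulr_ge0; [exact: ltW | lra].
have k3 : 0 <= (d%:R - 2) * (eta * T) by apply: mulr_ge0; lra.
nra.
Qed.

End OneRound.
End Eigenbasis.

Theorem lemma5 (R : rcfType) (d : nat) (eta : R) (W L U : 'M[R]_d) (mu : 'I_d -> R) :
  (2 <= d)%N ->
  0 < eta -> eta <= (2 * d%:R)^-1 ->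
  U^T *m U = 1%:M ->
  W = \sum_(i < d) mu i *: (ucol U i *m (ucol U i)^T) ->
  posdef W -> density W ->
  L^T = L -> spec_norm_le1 L ->
  (forall (i j : 'I_d) (b : bool), posdef (invmx W + eta *: Ltil U mu eta L i j b)) /\
  Et mu eta (fun i j b =>
      frob_inner (W - invmx (invmx W + eta *: Ltil U mu eta L i j b))
                 (Ltil U mu eta L i j b))
    <= 8 * eta * d%:R * frob_norm2 L.
Proof.
move=> hd heta heta_small hU hW hWpd _ hL hLs; split.
  move=> i j b; case: (eqVneq i j) => [<-|hij].
    exact: (diag_draw_posdef hU hW hWpd hLs hd heta heta_small).
  exact: (offdiag_draw_posdef hU hW hWpd hLs hd heta heta_small).
rewrite (frob_norm2_eig hU).
exact: (expected_gain_bound hU hW hWpd hL hLs hd heta heta_small).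
Qed.
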